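(* For every integer $k\ge1$, every $d\in\mathbb N$ and every $j\in\{1,2,3,4\}$, $$G_j(k,d)=\Big(\frac{\sqrt2}{3}\Big)^k\Big(\frac1{\sqrt2}\Big)^d\frac1{k!}\,\partial_x^k\big[g_j(x)\,z_-(\mu(x))^d\big]_{x=0}.$$
   Context: Let $\mathcal B$ be the $2$-regular Bethe lattice: the infinite tree in which every node has exactly $3$ neighbours, viewed as a metric graph with each edge isometric to $]0,1[$; $\mathrm{dist}$ is the path-length distance, $m(B)$ the midpoint of edge $B$. Each edge has two orientations; $-\vec B$ is the opposite of $\vec B$; write $\vec A\to\vec B$ when the terminal node of $\vec A$ is the initial node of $\vec B$. Define the matrix $G(1)$ indexed by oriented edges by $G(1,\vec B,\vec A)=-1/3$ if $\vec B=-\vec A$, $2/3$ if $\vec A\to\vec B$ and $\vec B\ne-\vec A$, $0$ otherwise, and $G(k)=G(1)^k$; $G(k,\vec B,\vec A)$ is the coefficient, at integer time $k$, of the Dirac mass propagating along $\vec B$ in the solution of the wave equation on $\mathcal B$ (speed $1$, Kirchhoff conditions at nodes) whose initial datum is a unit Dirac mass at $m(A)$ propagating along $\vec A$. Types of a pair $(\vec A,\vec B)$ with $d=\mathrm{dist}(m(A),m(B))\ge1$: say $\vec A$ points toward $B$ if the terminal node of $\vec A$ lies on the geodesic from $m(A)$ to $m(B)$, and $\vec B$ points away from $A$ if the initial node of $\vec B$ lies on that geodesic. Type 1: $\vec A$ toward $B$, $\vec B$ away from $A$; type 2: $\vec A$ toward $B$, $\vec B$ toward $A$; type 3: $\vec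 A$ away from $B$, $\vec B$ toward $A$; type 4: $\vec A$ away from $B$, $\vec B$ away from $A$. For $d=0$, types 1 and 3 mean $\vec B=\vec A$ and types 2 and 4 mean $\vec B=-\vec A$. $G_j(k,d)$ denotes $G(k,\vec B,\vec A)$ for any pair of type $j$ at distance $d$ (it depends only on $j,k,d$). Let $r=\sqrt2/3$, $\mu(x)=2x/(1+x^2/r^2)$, $z_-(\mu)=\frac1{2\mu}(1-\sqrt{1-4\mu^2})$ (principal branch, $z_-(0)=0$). With $z=z_-(\mu(x))$ and $D(x)=(1-\frac52xz)^2-\frac{x^2}2z^4$: $g_1=\frac{z}{2x}\frac{(1-2xz)(1-\frac52xz+\frac{x^2}2z^2)}{D}$ (extended by continuity at $0$), $g_2=-\frac{z}{2\sqrt2}\frac{1-\frac52xz+\frac{x^2}2z^2}{D}$, $g_3=\frac{xz}4\frac{1-\frac52xz+z^2}{D}$, $g_4=-\frac{z}{2\sqrt2}\frac{(1-2xz)(1-\frac52xz+z^2)}{D}$, all holomorphic near $x=0$. *)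

From Stdlib Require Import Reals List Arith Lia.
From Coquelicot Require Import Coquelicot.
Import ListNotations.
Open Scope R_scope.

(* The 2-regular Bethe lattice (infinite 3-regular tree), realised as  *)
(* the Cayley graph of Z/2 * Z/2 * Z/2 with generators 0,1,2.          *)
(* A node is a reduced word over {0,1,2} (no two equal consecutive      *)
(* letters), stored LAST LETTER FIRST.  Nodes w and vmul w a are joined *)
(* by an edge; every node has exactly 3 neighbours.                    *)
Definition vertex := list nat.

Fixpoint reduced (w : list nat) : Prop :=
  match w with
  | [] => True
  | a :: w' => (a < 3)%nat /\ reduced w' /\
               match w' with [] => True | b :: _ => a <> b end
  end.

Definition vmul (w : vertex) (a : nat) : vertex :=
  match w with
  | b :: w' => if Nat.eqb a b then w' else a :: w
  | [] => [a]
  end.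

Record oedge := OE { otail : vertex ; olabel : nat }.

Definition ohead (e : oedge) : vertex := vmul (otail e) (olabel e).
Definition oopp (e : oedge) : oedge := OE (ohead e) (olabel e).
Definition valid_oedge (e : oedge) : Prop :=
  reduced (otail e) /\ (olabel e < 3)%nat.

Definition oedge_eq_dec (e f : oedge) : {e = f} + {e <> f}.
Proof. decide equality; [apply Nat.eq_dec | apply (list_eq_dec Nat.eq_dec)]. Defined.

(* Path-length distance of the metric graph (edges of length 1).       *)
(* To stay in nat we use TWICE the distance (dist2 = 2 * dist).        *)
Fixpoint lcp (u v : list nat) : nat :=
  match u, v with
  | a :: u', b :: v' => if Nat.eqb a b then S (lcp u' v') else O
  | _, _ => O
  end.

Definition vdist (u v : vertex) : nat :=
  (length u + length v - 2 * lcp (rev u) (rev v))%nat.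

(* points of the metric graph we need: nodes and edge midpoints m(e) *)
Inductive point := Node (v : vertex) | Mid (e : oedge).

Definition same_edge (e f : oedge) : bool :=
  if oedge_eq_dec e f then true else if oedge_eq_dec e (oopp f) then true else false.

Definition dist2 (p q : point) : nat :=
  match p, q with
  | Node v, Node w => (2 * vdist v w)%nat
  | Node v, Mid e | Mid e, Node v =>
      (2 * Nat.min (vdist v (otail e)) (vdist v (ohead e)) + 1)%nat
  | Mid e, Mid f =>
      if same_edge e f then O
      else (2 * Nat.min (Nat.min (vdist (otail e) (otail f)) (vdist (otail e) (ohead f)))
                        (Nat.min (vdist (ohead e) (otail f)) (vdist (ohead e) (ohead f))) + 2)%nat
  end.

Definition on_geodesic (v : vertex) (p q : point) : Prop :=
  (dist2 p (Node v) + dist2 (Node v) q = dist2 p q)%nat.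

Definition points_toward (X Y : oedge) : Prop := on_geodesic (ohead X) (Mid X) (Mid Y).
Definition points_away (X Y : oedge) : Prop := on_geodesic (otail X) (Mid X) (Mid Y).

Definition pair_type (j : nat) (A B : oedge) : Prop :=
  match dist2 (Mid A) (Mid B) with
  | O => match j with
         | 1%nat | 3%nat => B = A
         | 2%nat | 4%nat => B = oopp A
         | _ => False
         end
  | _ => match j with
         | 1%nat => points_toward A B /\ points_away B A
         | 2%nat => points_toward A B /\ points_toward B A
         | 3%nat => points_away A B /\ points_toward B A
         | 4%nat => points_away A B /\ points_away B A
         | _ => False
         end
  end.

Definition G1 (B A : oedge) : R :=
  if oedge_eq_dec B (oopp A) then - (1/3)
  else if list_eq_dec Nat.eq_dec (ohead A) (otail B) then 2/3 else 0.

(* Matrix product (G(1) G(k))(B,A) = sum_{A'} G(1,B,A') G(k,A',A).  The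
   row G(1,B,.) vanishes outside the 3 oriented edges A' with terminal node
   the initial node v of B, namely A' = OE (vmul v c) c, c = 0,1,2. *)
Fixpoint G (k : nat) (B A : oedge) : R :=
  match k with
  | O => if oedge_eq_dec B A then 1 else 0
  | S k' =>
      let v := otail B in
      G1 B (OE (vmul v 0) 0) * G k' (OE (vmul v 0) 0) A
    + G1 B (OE (vmul v 1) 1) * G k' (OE (vmul v 1) 1) A
    + G1 B (OE (vmul v 2) 2) * G k' (OE (vmul v 2) 2) A
  end.

Definition rr : R := sqrt 2 / 3.
Definition mu (x : R) : R := 2 * x / (1 + x ^ 2 / rr ^ 2).
Definition z_minus (m : R) : R :=
  if Req_EM_T m 0 then 0 else (1 - sqrt (1 - 4 * m ^ 2)) / (2 * m).
Definition zz (x : R) : R := z_minus (mu x).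
Definition DD (x : R) : R :=
  (1 - 5/2 * x * zz x) ^ 2 - x ^ 2 / 2 * zz x ^ 4.

Definition g1_raw (x : R) : R :=
  zz x / (2 * x) * ((1 - 2 * x * zz x) * (1 - 5/2 * x * zz x + x ^ 2 / 2 * zz x ^ 2)) / DD x.
(* extended by continuity at 0 *)
Definition g1 (x : R) : R :=
  if Req_EM_T x 0 then real (Lim g1_raw 0) else g1_raw x.
Definition g2 (x : R) : R :=
  - (zz x / (2 * sqrt 2)) * (1 - 5/2 * x * zz x + x ^ 2 / 2 * zz x ^ 2) / DD x.
Definition g3 (x : R) : R :=
  x * zz x / 4 * (1 - 5/2 * x * zz x + zz x ^ 2) / DD x.
Definition g4 (x : R) : R :=
  - (zz x / (2 * sqrt 2)) * ((1 - 2 * x * zz x) * (1 - 5/2 * x * zz x + zz x ^ 2)) / DD x.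

Definition gj (j : nat) : R -> R :=
  match j with 1%nat => g1 | 2%nat => g2 | 3%nat => g3 | _ => g4 end.

(* The tree is the Cayley graph of Z/2 * Z/2 * Z/2, and left multiplication by a
   generator is an automorphism preserving G(1), distances and types.  Hence
   G(k,B,A) depends only on the type and distance of (A,B), and after moving the
   initial node of B to the root, the row B of G(k+1) = G(1) G(k) expresses it
   through the classes of the pairs formed by A and the three edges entering the
   root: the numbers G_j(k,d) obey a linear recursion f_(k+1) = Gstep f_k.

   Their generating series U_(j,d)(y) = sum_k G_j(k,d) y^k therefore solve
   U = delta + y Gstep U.  So do y |-> g_j(r y) (z_-(mu(r y)) / sqrt 2)^d: in the
   variables t = y/3 and W = z_-/sqrt 2 these are rational identities modulo the
   quadratic equation mu z^2 - z + mu = 0 satisfied by z_-(mu).  For |y| <= 1/10,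
   y Gstep contracts bounded families by 1/6, so both solutions agree and the
   formula is the Taylor coefficient at 0.  At d = 0 types 3 and 4 coincide with
   types 1 and 2 while g_3 = g_1 - 1 and g_4 = g_2, whence k >= 1. *)

From Stdlib Require Import Reals List Arith Lia Lra.
From Coquelicot Require Import Coquelicot.
Import ListNotations.

Local Open Scope nat_scope.

Lemma lcp_comm u v : lcp u v = lcp v u.
Proof.
  revert v; induction u as [|a u IH]; intros [|b v]; simpl; auto.
  rewrite (Nat.eqb_sym b a). destruct (a =? b); auto.
Qed.

Lemma lcp_le_length_l u v : lcp u v <= length u.
Proof.
  revert v; induction u as [|a u IH]; intros [|b v]; simpl; try lia.
  destruct (a =? b); specialize (IH v); lia.
Qed.

Lemma lcp_le_length_r u v : lcp u v <= length v.
Proof. rewrite lcp_comm; apply lcp_le_length_l. Qed.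

Lemma lcp_diag u : lcp u u = length u.
Proof. induction u; simpl; auto. rewrite Nat.eqb_refl; auto. Qed.

Lemma lcp_nil_r u : lcp u [] = 0.
Proof. destruct u; reflexivity. Qed.

Lemma lcp_cons_hd_neq g W U : hd_error U <> Some g -> lcp (g :: W) U = 0.
Proof.
  destruct U as [|a U]; intros H; [reflexivity|]. simpl.
  destruct (Nat.eqb_spec g a); [subst; simpl in H; congruence|reflexivity].
Qed.

Lemma vdist_comm u v : vdist u v = vdist v u.
Proof. unfold vdist; rewrite lcp_comm; lia. Qed.

Lemma vdist_diag u : vdist u u = 0.
Proof. unfold vdist; rewrite lcp_diag, length_rev; lia. Qed.

Lemma vdist_nil_r v : vdist v [] = length v.
Proof. unfold vdist; simpl. destruct (rev v); simpl; lia. Qed.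

Lemma vdist_nil_l v : vdist [] v = length v.
Proof. rewrite vdist_comm; apply vdist_nil_r. Qed.

Lemma hd_rev (l : list nat) d : hd d (rev l) = last l d.
Proof.
  induction l as [|a [|b l] IH]; [reflexivity|reflexivity|].
  change (last (a :: b :: l) d) with (last (b :: l) d).
  rewrite <- IH. change (rev (a :: b :: l)) with (rev (b :: l) ++ [a]).
  destruct (rev (b :: l)) eqn:E; [|reflexivity].
  apply (f_equal (@length nat)) in E; rewrite length_rev in E; discriminate.
Qed.

Lemma last_cons (p : list nat) x y : last (y :: p) x = last p y.
Proof.
  revert x y; induction p as [|z q IH]; intros x y; [reflexivity|].
  change (last (y :: z :: q) x) with (last (z :: q) x). rewrite !IH. reflexivity.
Qed.

Lemma vdist_singleton_r v c : v <> [] ->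
  vdist v [c] = if last v 0 =? c then length v - 1 else S (length v).
Proof.
  intros Hv. unfold vdist. rewrite <- hd_rev.
  assert (L : length (rev v) = length v) by apply length_rev.
  destruct (rev v) as [|y r]; [destruct v; simpl in L; congruence|].
  simpl. rewrite lcp_nil_r. destruct (y =? c); simpl in L |- *; lia.
Qed.

Lemma vmul_reduced w a : reduced w -> a < 3 -> reduced (vmul w a).
Proof.
  destruct w as [|b w]; simpl; [tauto|].
  destruct (Nat.eqb_spec a b); simpl; tauto.
Qed.

Lemma vmul_nil a : vmul [] a = [a].
Proof. reflexivity. Qed.

Lemma vmul_cons_eq a w : vmul (a :: w) a = w.
Proof. simpl. rewrite Nat.eqb_refl. reflexivity. Qed.

Lemma vmul_cons_neq a b w : a <> b -> vmul (b :: w) a = a :: b :: w.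
Proof. intros Hab. simpl. rewrite (proj2 (Nat.eqb_neq a b) Hab). reflexivity. Qed.

Lemma vmulK w a : reduced w -> vmul (vmul w a) a = w.
Proof.
  intros Hw. destruct w as [|b w]; simpl; [rewrite Nat.eqb_refl; auto|].
  destruct (Nat.eqb_spec a b) as [->|Hab].
  - destruct w as [|c w]; simpl; auto.
    destruct Hw as (_ & _ & Hbc). destruct (Nat.eqb_spec b c); [congruence|auto].
  - simpl. rewrite Nat.eqb_refl. auto.
Qed.

Lemma reduced_app_singleton l a : reduced l -> a < 3 -> (l = [] \/ last l 0 <> a) ->
  reduced (l ++ [a]).
Proof.
  induction l as [|x l IH]; intros Hl Ha Hne; simpl; [tauto|].
  destruct Hl as (Hx & Hl & Hxl). repeat split; [auto| |].
  - apply IH; auto. destruct l as [|y l]; [left; auto|right].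
    destruct Hne as [Hne|Hne]; [discriminate|exact Hne].
  - destruct l as [|y l]; simpl; [|auto].
    destruct Hne as [Hne|Hne]; [discriminate|auto].
Qed.

Lemma reduced_rev w : reduced w -> reduced (rev w).
Proof.
  induction w as [|a w IH]; intros H; simpl; [auto|].
  destruct H as (Ha & Hw & Hne). apply reduced_app_singleton; auto.
  destruct w as [|b w]; [left; reflexivity|right].
  change (rev (b :: w)) with (rev w ++ [b]). rewrite last_last. auto.
Qed.

(** * Left multiplication by a generator is an automorphism of the tree *)

(* The word [g w]: words are stored last letter first. *)
Definition lmul (g : nat) (w : vertex) : vertex := rev (vmul (rev w) g).

Lemma lmul_reduced g w : reduced w -> g < 3 -> reduced (lmul g w).
Proof. intros. apply reduced_rev, vmul_reduced; [apply reduced_rev|]; auto. Qed.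

Lemma lmulK g w : reduced w -> lmul g (lmul g w) = w.
Proof.
  intros. unfold lmul. rewrite rev_involutive, vmulK, rev_involutive; auto.
  apply reduced_rev; auto.
Qed.

Lemma lmul_inj g u v : reduced u -> reduced v -> lmul g u = lmul g v -> u = v.
Proof. intros Hu Hv H. rewrite <- (lmulK g u), <- (lmulK g v), H; auto. Qed.

Lemma lmul_cons g x w : w <> [] -> lmul g (x :: w) = x :: lmul g w.
Proof.
  intros Hw. unfold lmul. simpl rev at 1.
  destruct (rev w) as [|h t] eqn:E.
  - exfalso. apply Hw. rewrite <- (rev_involutive w), E. reflexivity.
  - simpl. destruct (g =? h); rewrite ?app_comm_cons, rev_app_distr; reflexivity.
Qed.

Lemma lmul_vmul g w a : lmul g (vmul w a) = vmul (lmul g w) a.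
Proof.
  destruct w as [|x [|y w]].
  - unfold lmul; simpl. rewrite Nat.eqb_sym. destruct (a =? g); reflexivity.
  - unfold lmul; simpl.
    destruct (Nat.eqb_spec a x), (Nat.eqb_spec g x), (Nat.eqb_spec g a), (Nat.eqb_spec a g);
      subst; simpl; rewrite ?Nat.eqb_refl; try congruence;
      repeat match goal with H : ?u <> ?v |- context [?u =? ?v] =>
        rewrite (proj2 (Nat.eqb_neq u v) H) end; reflexivity.
  - rewrite (lmul_cons g x (y :: w)) by discriminate. simpl vmul.
    destruct (a =? x); auto.
    rewrite !lmul_cons by discriminate. reflexivity.
Qed.

Lemma vmul_cases U g : reduced U ->
  (exists U', U = g :: U' /\ vmul U g = U' /\ hd_error U' <> Some g) \/
  (vmul U g = g :: U /\ hd_error U <> Some g).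
Proof.
  intros HU. destruct U as [|a U]; [right; split; [reflexivity|discriminate]|].
  destruct (Nat.eqb_spec g a) as [<-|Hga].
  - left. exists U. simpl. rewrite Nat.eqb_refl. repeat split.
    destruct U as [|b U]; simpl; [discriminate|].
    destruct HU as (_ & _ & Hne). intros H; injection H; auto.
  - right. simpl. rewrite (proj2 (Nat.eqb_neq g a) Hga).
    split; [reflexivity|]. intros H; injection H; auto.
Qed.

Lemma vdist_formula_vmul U V g : reduced U -> reduced V ->
  length (vmul U g) + length (vmul V g) - 2 * lcp (vmul U g) (vmul V g)
  = length U + length V - 2 * lcp U V.
Proof.
  intros HU HV.
  assert (HUV := lcp_le_length_l U V). assert (HVU := lcp_le_length_r U V).
  destruct (vmul_cases U g HU) as [(U' & -> & -> & HU')|(-> & HU')];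
  destruct (vmul_cases V g HV) as [(V' & -> & -> & HV')|(-> & HV')].
  - simpl lcp in *. rewrite Nat.eqb_refl in *. simpl length in *. lia.
  - rewrite (lcp_comm U' (g :: V)), (lcp_cons_hd_neq g V U' HU'), (lcp_cons_hd_neq g U' V HV').
    simpl length. lia.
  - rewrite (lcp_comm U (g :: V')), (lcp_cons_hd_neq g U V' HV'), (lcp_cons_hd_neq g V' U HU').
    simpl length. lia.
  - simpl lcp at 1. rewrite Nat.eqb_refl. simpl length. lia.
Qed.

Lemma vdist_lmul g u v : reduced u -> reduced v -> vdist (lmul g u) (lmul g v) = vdist u v.
Proof.
  intros Hu Hv. unfold vdist, lmul. rewrite !rev_involutive, !length_rev.
  rewrite vdist_formula_vmul by (apply reduced_rev; auto).
  rewrite !length_rev. reflexivity.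
Qed.

Definition oedge_lmul (g : nat) (e : oedge) : oedge := OE (lmul g (otail e)) (olabel e).

Definition point_lmul (g : nat) (p : point) : point :=
  match p with Node v => Node (lmul g v) | Mid e => Mid (oedge_lmul g e) end.

Definition valid_point (p : point) : Prop :=
  match p with Node v => reduced v | Mid e => valid_oedge e end.

Lemma ohead_reduced e : valid_oedge e -> reduced (ohead e).
Proof. intros [Ht Hl]. apply vmul_reduced; auto. Qed.

Lemma oopp_valid e : valid_oedge e -> valid_oedge (oopp e).
Proof. intros He. split; [apply ohead_reduced; auto|apply He]. Qed.

Lemma oedge_lmul_valid g e : g < 3 -> valid_oedge e -> valid_oedge (oedge_lmul g e).
Proof. intros Hg [Ht Hl]. split; [apply lmul_reduced|]; auto. Qed.

Lemma ohead_lmul g e : ohead (oedge_lmul g e) = lmul g (ohead e).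
Proof. symmetry; apply lmul_vmul. Qed.

Lemma oopp_lmul g e : oopp (oedge_lmul g e) = oedge_lmul g (oopp e).
Proof. unfold oopp. rewrite ohead_lmul. reflexivity. Qed.

Lemma oedge_lmul_inj g e f : valid_oedge e -> valid_oedge f ->
  oedge_lmul g e = oedge_lmul g f -> e = f.
Proof.
  destruct e as [t l], f as [t' l']; intros [Ht _] [Ht' _] H.
  injection H as Et ->. f_equal. apply (lmul_inj g); auto.
Qed.

Lemma oedge_lmul_eq g e f : valid_oedge e -> valid_oedge f ->
  (oedge_lmul g e = oedge_lmul g f <-> e = f).
Proof. split; [apply oedge_lmul_inj; auto|intros ->; reflexivity]. Qed.

Lemma same_edge_lmul g e f : valid_oedge e -> valid_oedge f ->
  same_edge (oedge_lmul g e) (oedge_lmul g f) = same_edge e f.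
Proof.
  intros He Hf. unfold same_edge. rewrite oopp_lmul.
  destruct (oedge_eq_dec (oedge_lmul g e) (oedge_lmul g f)) as [E1|E1],
           (oedge_eq_dec e f) as [E2|E2];
    rewrite ?oedge_lmul_eq in E1 by auto; try tauto.
  destruct (oedge_eq_dec (oedge_lmul g e) (oedge_lmul g (oopp f))) as [E3|E3],
           (oedge_eq_dec e (oopp f)) as [E4|E4];
    rewrite ?oedge_lmul_eq in E3 by (auto using oopp_valid); tauto.
Qed.

Lemma dist2_lmul g p q : valid_point p -> valid_point q ->
  dist2 (point_lmul g p) (point_lmul g q) = dist2 p q.
Proof.
  destruct p as [v|e], q as [w|f]; simpl; intros Hp Hq;
    rewrite ?same_edge_lmul, ?ohead_lmul by auto;
    assert (Hr := ohead_reduced); unfold valid_oedge in *;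
    rewrite ?vdist_lmul by (intuition auto); reflexivity.
Qed.

Lemma on_geodesic_lmul g v p q : reduced v -> valid_point p -> valid_point q ->
  (on_geodesic (lmul g v) (point_lmul g p) (point_lmul g q) <-> on_geodesic v p q).
Proof.
  intros Hv Hp Hq. unfold on_geodesic.
  change (Node (lmul g v)) with (point_lmul g (Node v)).
  rewrite !dist2_lmul by auto. reflexivity.
Qed.

Lemma points_toward_lmul g e f : valid_oedge e -> valid_oedge f ->
  (points_toward (oedge_lmul g e) (oedge_lmul g f) <-> points_toward e f).
Proof.
  intros He Hf. unfold points_toward. rewrite ohead_lmul.
  apply (on_geodesic_lmul g _ (Mid e) (Mid f)); auto using ohead_reduced.
Qed.

Lemma points_away_lmul g e f : valid_oedge e -> valid_oedge f ->
  (points_away (oedge_lmul g e) (oedge_lmul g f) <-> points_away e f).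
Proof.
  intros He Hf. apply (on_geodesic_lmul g _ (Mid e) (Mid f)); auto. apply He.
Qed.

Lemma pair_type_lmul g j A B : valid_oedge A -> valid_oedge B ->
  (pair_type j (oedge_lmul g A) (oedge_lmul g B) <-> pair_type j A B).
Proof.
  intros HA HB. unfold pair_type.
  change (Mid (oedge_lmul g ?e)) with (point_lmul g (Mid e)).
  rewrite dist2_lmul by auto. simpl point_lmul.
  destruct (dist2 (Mid A) (Mid B)); destruct j as [|[|[|[|[|j]]]]]; try tauto;
    rewrite ?oopp_lmul, ?oedge_lmul_eq, ?points_toward_lmul, ?points_away_lmul
      by auto using oopp_valid; tauto.
Qed.

Lemma G1_lmul g B A : valid_oedge A -> valid_oedge B ->
  G1 (oedge_lmul g B) (oedge_lmul g A) = G1 B A.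
Proof.
  intros HA HB. unfold G1. rewrite oopp_lmul, ohead_lmul.
  destruct (oedge_eq_dec (oedge_lmul g B) (oedge_lmul g (oopp A))) as [E1|E1],
           (oedge_eq_dec B (oopp A)) as [E2|E2];
    rewrite ?oedge_lmul_eq in E1 by auto using oopp_valid; try tauto.
  simpl otail.
  destruct (list_eq_dec Nat.eq_dec (lmul g (ohead A)) (lmul g (otail B))) as [E3|E3],
           (list_eq_dec Nat.eq_dec (ohead A) (otail B)) as [E4|E4]; auto.
  - apply lmul_inj in E3; [congruence|apply ohead_reduced; auto|apply HB].
  - rewrite E4 in E3; congruence.
Qed.

Lemma G_lmul k g B A : g < 3 -> valid_oedge A -> valid_oedge B ->
  G k (oedge_lmul g B) (oedge_lmul g A) = G k B A.
Proof.
  revert B A; induction k as [|k IH]; intros B A Hg HA HB.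
  - cbn -[oedge_eq_dec oedge_lmul].
    destruct (oedge_eq_dec (oedge_lmul g B) (oedge_lmul g A)) as [E1|E1],
             (oedge_eq_dec B A) as [E2|E2];
      rewrite ?oedge_lmul_eq in E1 by auto; tauto.
  - assert (Hc : forall c, c < 3 -> valid_oedge (OE (vmul (otail B) c) c))
      by (intros c Hc; split; simpl; auto; apply vmul_reduced; auto; apply HB).
    assert (Ec : forall c, OE (vmul (lmul g (otail B)) c) c
                           = oedge_lmul g (OE (vmul (otail B) c) c))
      by (intros c; unfold oedge_lmul; simpl; rewrite lmul_vmul; auto).
    simpl G. rewrite !Ec, !G1_lmul, !IH by auto. reflexivity.
Qed.

Lemma reduced_In_lt3 l z : reduced l -> In z l -> z < 3.
Proof.
  induction l as [|a l IH]; intros H Hin; [destruct Hin|].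
  destruct H as (Ha & Hl & _). destruct Hin as [->|Hin]; auto.
Qed.

Lemma lmul_app_singleton w z : lmul z (w ++ [z]) = w.
Proof.
  unfold lmul. rewrite rev_app_distr. simpl. rewrite Nat.eqb_refl. apply rev_involutive.
Qed.

(* Translating by the letters of [otail B], one at a time, moves the initial
   node of [B] to the root. *)
Lemma root_reduction (P : oedge -> oedge -> Prop) :
  (forall g A B, g < 3 -> valid_oedge A -> valid_oedge B ->
     P (oedge_lmul g A) (oedge_lmul g B) -> P A B) ->
  (forall A b, valid_oedge A -> b < 3 -> P A (OE [] b)) ->
  forall A B, valid_oedge A -> valid_oedge B -> P A B.
Proof.
  intros Hinv Hroot.
  enough (H : forall n A B, length (otail B) = n -> valid_oedge A -> valid_oedge B -> P A B)
    by (intros A B; apply H with (n := length (otail B)); auto).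
  induction n as [|n IH]; intros A [t b] Hn HA HB; simpl in Hn.
  - destruct t; [apply Hroot; auto; apply HB|discriminate].
  - destruct (exists_last (l := t)) as (w & z & ->); [intros ->; discriminate|].
    assert (Hz : z < 3)
      by (apply (reduced_In_lt3 (w ++ [z])); [apply HB|apply in_or_app; right; left; auto]).
    apply (Hinv z); auto. apply IH; auto using oedge_lmul_valid.
    simpl. rewrite lmul_app_singleton. rewrite length_app in Hn. simpl in Hn. lia.
Qed.

(** * Pairs of edges at the root *)

(* At distance 0, types 1 and 3 (resp. 2 and 4) describe the same pairs. *)
Definition canon_type (j d : nat) : nat :=
  match d with O => if Nat.odd j then 1 else 2 | _ => j end.

Definition orient_type (toward_AB toward_BA : bool) : nat :=
  if toward_AB then (if toward_BA then 2 else 1) else (if toward_BA then 3 else 4).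

Definition pair_data (A B : oedge) (toward_AB toward_BA : bool) (d : nat) : Prop :=
  dist2 (Mid A) (Mid B) = 2 * d /\
  (d = 0 -> (B = A <-> toward_AB <> toward_BA) /\ (B = oopp A <-> toward_AB = toward_BA)) /\
  (d <> 0 -> (points_toward A B <-> toward_AB = true) /\ (points_away A B <-> toward_AB = false) /\
             (points_toward B A <-> toward_BA = true) /\ (points_away B A <-> toward_BA = false)).

Lemma pair_type_of_data A B tAB tBA d j : pair_data A B tAB tBA d ->
  (pair_type j A B <-> 1 <= j <= 4 /\ canon_type j d = canon_type (orient_type tAB tBA) d).
Proof.
  intros (Hd & H0 & H1). unfold pair_type. rewrite Hd.
  destruct d as [|d].
  - destruct (H0 eq_refl) as [HA HO].
    destruct j as [|[|[|[|[|j]]]]]; simpl; rewrite ?HA, ?HO;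
      destruct tAB, tBA; simpl; intuition (try lia; congruence).
  - replace (2 * S d) with (S (S (2 * d))) by lia.
    destruct (H1 ltac:(lia)) as (T1 & T2 & T3 & T4).
    destruct j as [|[|[|[|[|j]]]]]; simpl; rewrite ?T1, ?T2, ?T3, ?T4;
      destruct tAB, tBA; simpl; intuition (try lia; congruence).
Qed.

(* The edge joining [p] to [x :: p], one letter farther from the root, oriented
   toward the root iff [inward]; every oriented edge is of this form. *)
Definition edge_at (inward : bool) (p : vertex) (x : nat) : oedge :=
  if inward then OE (x :: p) x else OE p x.

Definition root_edge (outward : bool) (c : nat) : oedge :=
  if outward then OE [] c else OE [c] c.

Lemma root_pair_data_nil inward outward x c : x < 3 -> c < 3 ->
  pair_data (edge_at inward [] x) (root_edge outward c)
    inward (Bool.eqb outward (x =? c)) (if x =? c then 0 else 1).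
Proof.
  intros Hx Hc.
  destruct x as [|[|[|x]]]; try lia; destruct c as [|[|[|c]]]; try lia;
    destruct inward, outward; vm_compute;
    repeat split; intros; solve [lia | discriminate | congruence | reflexivity | tauto].
Qed.

Lemma edge_at_root_edge_distinct inward outward x y p c : x <> y ->
  same_edge (edge_at inward (y :: p) x) (root_edge outward c) = false /\
  same_edge (root_edge outward c) (edge_at inward (y :: p) x) = false.
Proof.
  intros Hxy. unfold same_edge, oopp, ohead, edge_at, root_edge.
  destruct inward, outward; simpl otail; simpl olabel;
    rewrite ?vmul_nil, ?vmul_cons_eq, ?vmul_cons_neq by auto;
    repeat match goal with |- context [oedge_eq_dec ?a ?b] =>
      let E := fresh "E" in
      destruct (oedge_eq_dec a b) as [E|E]; [injection E; intros; subst; congruence|] end;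
    split; reflexivity.
Qed.

Lemma root_pair_data_cons inward outward x y p c : reduced (x :: y :: p) -> c < 3 ->
  let br := last (y :: p) x =? c in
  pair_data (edge_at inward (y :: p) x) (root_edge outward c)
    inward (Bool.eqb outward br) (if br then length (y :: p) else S (length (y :: p))).
Proof.
  intros Hr Hc br.
  assert (Hxy : x <> y) by apply Hr.
  assert (HL : last (x :: y :: p) 0 = last (y :: p) x) by apply last_cons.
  assert (HL' : last (y :: p) 0 = last (y :: p) x) by (rewrite !last_cons; reflexivity).
  assert (Dyp : vdist (y :: p) [c] = if br then length p else S (S (length p))).
  { rewrite vdist_singleton_r by discriminate. unfold br. rewrite HL'.
    simpl length. destruct (_ =? c); lia. }
  assert (Dxyp : vdist (x :: y :: p) [c] = if br then S (length p) else S (S (S (length p)))).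
  { rewrite vdist_singleton_r by discriminate. unfold br. rewrite HL.
    simpl length. destruct (_ =? c); lia. }
  assert (Dyp' := Dyp). rewrite vdist_comm in Dyp'.
  assert (Dxyp' := Dxyp). rewrite vdist_comm in Dxyp'.
  destruct (edge_at_root_edge_distinct inward outward x y p c Hxy) as [Hse1 Hse2].
  unfold pair_data, points_toward, points_away, on_geodesic, dist2.
  rewrite Hse1, Hse2.
  unfold edge_at, root_edge, ohead; destruct inward, outward; simpl otail; simpl olabel;
    rewrite ?vmul_nil, ?vmul_cons_eq, ?vmul_cons_neq, ?vdist_nil_r, ?vdist_nil_l,
      ?Dyp, ?Dxyp, ?Dyp', ?Dxyp', ?vdist_diag by auto;
    simpl length; destruct br; cbn -[Nat.min];
    repeat split; intros; solve [lia | discriminate | congruence].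
Qed.

(* [last p x] is the first letter of [x :: p], i.e. the branch at the root
   containing [edge_at inward p x]. *)
Lemma root_pair_data inward outward p x c : reduced (x :: p) -> c < 3 ->
  pair_data (edge_at inward p x) (root_edge outward c) inward
    (Bool.eqb outward (last p x =? c)) (if last p x =? c then length p else S (length p)).
Proof.
  destruct p as [|y p]; intros Hr Hc.
  - apply root_pair_data_nil; [apply Hr|auto].
  - apply root_pair_data_cons; auto.
Qed.

Lemma last_lt3 p x : reduced (x :: p) -> last p x < 3.
Proof.
  revert x; induction p as [|y p IH]; intros x Hr; [apply Hr|].
  rewrite last_cons. apply IH, Hr.
Qed.

Lemma edge_at_decompose A : valid_oedge A ->
  exists inward p x, reduced (x :: p) /\ A = edge_at inward p x.
Proof.
  destruct A as [[|b t] a]; intros [Ht Ha]; simpl in *.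
  - exists false, [], a. split; [simpl; tauto|reflexivity].
  - destruct (Nat.eqb_spec a b) as [<-|Hab].
    + exists true, t, a. split; [exact Ht|reflexivity].
    + exists false, (b :: t), a. split; [simpl in *; tauto|reflexivity].
Qed.

Lemma oopp_neq A : valid_oedge A -> oopp A <> A.
Proof.
  destruct A as [[|b t] a]; intros _ H; unfold oopp, ohead in H; simpl in H;
    injection H; [discriminate|].
  destruct (a =? b); intros E; apply (f_equal (@length nat)) in E; simpl in E; lia.
Qed.

Lemma dist2_diag A : dist2 (Mid A) (Mid A) = 0.
Proof. simpl. unfold same_edge. destruct (oedge_eq_dec A A); [reflexivity|congruence]. Qed.

(** * The recursion on classes of pairs *)

Local Open Scope R_scope.

(* Row [B] of [G(k+1) = G(1) G(k)] for [B] leaving the root, the three terms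
   being grouped by the class of the pair formed by [A] and an edge entering
   the root. *)
Definition Gstep (H : nat -> nat -> R) (j d : nat) : R :=
  match d with
  | O => match j with
         | 1%nat => -(1/3) * H 2%nat 0%nat + 4/3 * H 3%nat 1%nat
         | _ => -(1/3) * H 1%nat 0%nat + 4/3 * H 2%nat 1%nat
         end
  | S d' => match j with
            | 1%nat => 1/3 * H 2%nat d + 2/3 * H 1%nat d'
            | 2%nat => -(1/3) * H 1%nat d + 4/3 * H 2%nat (S d)
            | 3%nat => -(1/3) * H 4%nat d + 4/3 * H 3%nat (S d)
            | _ => 1/3 * H 3%nat d + 2/3 * H (canon_type 4 d') d'
            end
  end.

Definition Gtype_init (j d : nat) : R :=
  match j, d with 1%nat, 0%nat => 1 | _, _ => 0 end.

Fixpoint Gtype (k : nat) : nat -> nat -> R :=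
  match k with O => Gtype_init | S k' => Gstep (Gtype k') end.

Lemma G0_eq_Gtype A B j d : valid_oedge A -> pair_type j A B ->
  dist2 (Mid A) (Mid B) = (2 * d)%nat -> G 0 B A = Gtype 0 (canon_type j d) d.
Proof.
  intros HA Hp Hd. unfold pair_type in Hp. rewrite Hd in Hp.
  cbn -[oedge_eq_dec]. destruct (oedge_eq_dec B A) as [->|Hne].
  - rewrite dist2_diag in Hd. destruct d as [|d]; [|lia].
    destruct j as [|[|[|[|[|j]]]]]; simpl in *; try tauto; exfalso; apply (oopp_neq A); auto.
  - destruct d as [|d]; [|destruct j as [|[|j]]; reflexivity].
    destruct j as [|[|[|[|[|j]]]]]; simpl in *; tauto.
Qed.

Section RootStep.

Variable k : nat.

Hypothesis IH : forall A B j d, valid_oedge A -> valid_oedge B -> pair_type j A B ->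
  dist2 (Mid A) (Mid B) = (2 * d)%nat -> G k B A = Gtype k (canon_type j d) d.

Lemma G_root_edge_in inward p x c : reduced (x :: p) -> (c < 3)%nat ->
  G k (OE [c] c) (edge_at inward p x) =
  Gtype k (canon_type (orient_type inward (Bool.eqb false (last p x =? c)))
             (if last p x =? c then length p else S (length p)))
          (if last p x =? c then length p else S (length p)).
Proof.
  intros Hr Hc. pose proof (root_pair_data inward false p x c Hr Hc) as Hdata.
  apply (IH _ (root_edge false c)); [| |apply (pair_type_of_data _ _ _ _ _ _ Hdata)|apply Hdata].
  - destruct inward; split; simpl otail; simpl olabel; try exact Hr; apply Hr.
  - repeat split; auto.
  - split; [|reflexivity]. destruct inward, (last p x =? c); simpl; lia.
Qed.

Lemma G_succ_root_edge_out inward p x b : reduced (x :: p) -> (b < 3)%nat ->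
  G (S k) (OE [] b) (edge_at inward p x) =
  Gtype (S k) (canon_type (orient_type inward (Bool.eqb true (last p x =? b)))
                 (if last p x =? b then length p else S (length p)))
              (if last p x =? b then length p else S (length p)).
Proof.
  intros Hr Hb.
  change (G (S k) (OE [] b) (edge_at inward p x)) with
    (G1 (OE [] b) (OE [0%nat] 0%nat) * G k (OE [0%nat] 0%nat) (edge_at inward p x)
   + G1 (OE [] b) (OE [1%nat] 1%nat) * G k (OE [1%nat] 1%nat) (edge_at inward p x)
   + G1 (OE [] b) (OE [2%nat] 2%nat) * G k (OE [2%nat] 2%nat) (edge_at inward p x)).
  rewrite !G_root_edge_in by (auto; lia).
  pose proof (last_lt3 p x Hr) as HL.
  destruct (last p x) as [|[|[|L]]]; try lia;
    destruct b as [|[|[|b]]]; try lia; destruct inward; destruct (length p) as [|n];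
    unfold G1; cbn -[Rmult Rplus Rdiv Ropp Rinv Gtype IZR];
    cbn [Gtype Gstep canon_type Nat.odd Nat.even negb]; lra.
Qed.

End RootStep.

Theorem G_eq_Gtype k A B j d : valid_oedge A -> valid_oedge B -> pair_type j A B ->
  dist2 (Mid A) (Mid B) = (2 * d)%nat -> G k B A = Gtype k (canon_type j d) d.
Proof.
  revert A B j d; induction k as [|k IH]; [intros; apply G0_eq_Gtype; auto|].
  intros A B j d HA HB. revert A B HA HB j d.
  apply (root_reduction (fun A B => forall j d, pair_type j A B ->
           dist2 (Mid A) (Mid B) = (2 * d)%nat -> G (S k) B A = Gtype (S k) (canon_type j d) d)).
  - intros g A B Hg HA HB H j d Hp Hd. rewrite <- (G_lmul (S k) g B A) by auto.
    apply H; [apply pair_type_lmul; auto|].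
    change (Mid (oedge_lmul g ?e)) with (point_lmul g (Mid e)). rewrite dist2_lmul; auto.
  - intros A b HA Hb j d Hp Hd.
    destruct (edge_at_decompose A HA) as (inward & p & x & Hr & ->).
    pose proof (root_pair_data inward true p x b Hr Hb) as Hdata.
    assert (d = if last p x =? b then length p else S (length p)) as ->
      by (destruct Hdata as [Hd0 _]; change (root_edge true b) with (OE [] b) in Hd0; lia).
    apply (pair_type_of_data _ _ _ _ _ j Hdata) in Hp as [_ ->].
    apply G_succ_root_edge_out; auto.
Qed.

(** * The functions [mu], [z_-] and [g_j] near 0 *)

Lemma sqrt2_bounds : 1.4 < sqrt 2 < 1.5.
Proof.
  assert (H2 := sqrt_sqrt 2 ltac:(lra)). assert (H0 := Rlt_sqrt2_0). split; nra.
Qed.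

Lemma rr_bounds : 0.46 < rr < 0.5.
Proof. unfold rr. pose proof sqrt2_bounds. lra. Qed.

Lemma mu_eq x : mu x = 4 * x / (2 + 9 * x ^ 2).
Proof.
  unfold mu, rr. assert (H : (sqrt 2 / 3) ^ 2 = 2 / 9).
  { unfold Rdiv. rewrite Rpow_mult_distr, pow2_sqrt by lra. field. }
  rewrite H. field. nra.
Qed.

Lemma mu_0 : mu 0 = 0.
Proof. rewrite mu_eq. unfold Rdiv. ring. Qed.

Lemma Rabs_mu_le x : Rabs (mu x) <= 2 * Rabs x.
Proof.
  rewrite mu_eq. assert (P : 0 < 2 + 9 * x ^ 2) by nra.
  unfold Rdiv. rewrite !Rabs_mult, (Rabs_pos_eq 4), (Rabs_pos_eq (/ _)) by
    (try apply Rlt_le, Rinv_0_lt_compat; lra).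
  apply (Rmult_le_reg_r (2 + 9 * x ^ 2)); auto.
  rewrite Rmult_assoc, Rinv_l by lra. pose proof (Rabs_pos x). nra.
Qed.

(* The bound holds because [z_- m = 2 m / (1 + sqrt (1 - 4 m^2))]. *)
Lemma z_minus_spec m : 4 * m ^ 2 <= 1 ->
  m * z_minus m ^ 2 - z_minus m + m = 0 /\ Rabs (z_minus m) <= 2 * Rabs m.
Proof.
  intros Hm. unfold z_minus. destruct (Req_EM_T m 0) as [->|Hm0].
  - rewrite Rabs_R0. split; [ring|lra].
  - set (q := sqrt (1 - 4 * m ^ 2)).
    assert (Hq2 : q * q = 1 - 4 * m ^ 2) by (apply sqrt_sqrt; lra).
    assert (Hq0 : 0 <= q) by apply sqrt_pos.
    split; [field_simplify_eq; [nra|auto]|].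
    replace ((1 - q) / (2 * m)) with (2 * m / (1 + q)) by (field_simplify_eq; [nra|lra]).
    unfold Rdiv. rewrite Rabs_mult, Rabs_mult, (Rabs_pos_eq 2), (Rabs_pos_eq (/ _))
      by (try apply Rlt_le, Rinv_0_lt_compat; lra).
    assert (/ (1 + q) <= 1) by (rewrite <- Rinv_1; apply Rinv_le_contravar; lra).
    pose proof (Rabs_pos m). nra.
Qed.

Lemma zz_0 : zz 0 = 0.
Proof. unfold zz. rewrite mu_0. unfold z_minus. destruct (Req_EM_T 0 0); [reflexivity|lra]. Qed.

Lemma zz_spec x : Rabs x <= 1/20 ->
  mu x * zz x ^ 2 - zz x + mu x = 0 /\ Rabs (zz x) <= 4 * Rabs x.
Proof.
  intros Hx. pose proof (Rabs_mu_le x) as Hmu. pose proof (Rabs_pos (mu x)).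
  destruct (z_minus_spec (mu x)) as [Hq Hb].
  - rewrite <- (pow2_abs (mu x)). nra.
  - unfold zz. split; [exact Hq|lra].
Qed.

(* [g_j(x)] in the variables [t = x / sqrt 2] and [W = z_-(mu x) / sqrt 2],
   in which all coefficients become integers. *)
Definition Fs t W := 1 - 4 * t * W.
Definition E1s t W := 1 - 5 * t * W + 2 * t ^ 2 * W ^ 2.
Definition E2s t W := 1 - 5 * t * W + 2 * W ^ 2.
Definition Ds t W := (1 - 5 * t * W) ^ 2 - 4 * t ^ 2 * W ^ 4.

Definition gs (j : nat) (t W : R) : R :=
  match j with
  | 1%nat => W / (2 * t) * (Fs t W * E1s t W) / Ds t W
  | 2%nat => - (W / 2) * E1s t W / Ds t W
  | 3%nat => t * W / 2 * E2s t W / Ds t W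
  | _ => - (W / 2) * (Fs t W * E2s t W) / Ds t W
  end.

Lemma scaled_forms s t W : s * s = 2 ->
  1 - 2 * (s * t) * (s * W) = Fs t W /\
  1 - 5/2 * (s * t) * (s * W) + (s * t) ^ 2 / 2 * (s * W) ^ 2 = E1s t W /\
  1 - 5/2 * (s * t) * (s * W) + (s * W) ^ 2 = E2s t W /\
  (1 - 5/2 * (s * t) * (s * W)) ^ 2 - (s * t) ^ 2 / 2 * (s * W) ^ 4 = Ds t W /\
  s * t * (s * W) / 4 = t * W / 2.
Proof.
  intros Hs.
  assert (P2 : s ^ 2 = 2) by (rewrite <- Hs; ring).
  assert (P4 : s ^ 4 = 4) by (replace (s ^ 4) with ((s ^ 2) ^ 2) by ring; rewrite P2; ring).
  assert (P6 : s ^ 6 = 8) by (replace (s ^ 6) with ((s ^ 2) ^ 3) by ring; rewrite P2; ring).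
  unfold Fs, E1s, E2s, Ds.
  repeat split; [..|replace (s * t * (s * W)) with (s * s * (t * W)) by ring; rewrite Hs; field];
    rewrite ?Rpow_mult_distr, ?P4, ?P2; ring_simplify; rewrite ?P6, ?P4, ?P2; field.
Qed.

Lemma gj_scaled j x : x <> 0 -> gj j x = gs j (x / sqrt 2) (zz x / sqrt 2).
Proof.
  intros Hx. pose proof Rlt_sqrt2_0 as Hs.
  assert (Hg1 : g1 x = g1_raw x) by (unfold g1; destruct (Req_EM_T x 0); tauto).
  set (t := x / sqrt 2). set (W := zz x / sqrt 2).
  assert (Ht : t <> 0)
    by (apply Rmult_integral_contrapositive_currified; [|apply Rinv_neq_0_compat]; lra).
  assert (Ez : zz x = sqrt 2 * W) by (unfold W; field; lra).
  assert (Ex : x = sqrt 2 * t) by (unfold t; field; lra).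
  destruct (scaled_forms (sqrt 2) t W (sqrt_sqrt 2 ltac:(lra))) as (C1 & C2 & C3 & C4 & C5).
  assert (C6 : sqrt 2 * W / (2 * sqrt 2) = W / 2) by (field; lra).
  assert (C7 : sqrt 2 * W / (2 * (sqrt 2 * t)) = W / (2 * t)) by (field; lra).
  destruct j as [|[|[|[|j]]]]; simpl gj; rewrite ?Hg1; unfold g1_raw, g2, g3, g4, DD;
    rewrite Ez, Ex, ?C1, ?C2, ?C3, ?C4, ?C5, ?C6, ?C7; reflexivity.
Qed.

(* The equation [mu z^2 - z + mu = 0] in the variables [t] and [W]. *)
Definition zrel t W := (1 + 9 * t ^ 2) * W - 2 * t * (1 + 2 * W ^ 2).

Lemma zrel_scaled s t W : s * s = 2 ->
  4 * (s * t) * (s * W) ^ 2 - (2 + 9 * (s * t) ^ 2) * (s * W) + 4 * (s * t)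
  = -2 * s * zrel t W.
Proof.
  intros Hs. unfold zrel.
  replace (4 * (s * t) * (s * W) ^ 2 - (2 + 9 * (s * t) ^ 2) * (s * W) + 4 * (s * t))
    with (s * (4 * (s * s) * t * W ^ 2 - (2 + 9 * (s * s) * t ^ 2) * W + 4 * t)) by ring.
  rewrite Hs. ring.
Qed.

(* With [x = rr y], the theorem says that [G_j(k,d)] is the coefficient of [y^k]
   in [g_j(x) W_of(y)^d]; moreover [t = x / sqrt 2 = y / 3]. *)
Definition W_of (y : R) : R := zz (rr * y) / sqrt 2.

Lemma W_of_0 : W_of 0 = 0.
Proof. unfold W_of. rewrite Rmult_0_r, zz_0. unfold Rdiv. ring. Qed.

Lemma rr_div_sqrt2 y : rr * y / sqrt 2 = y / 3.
Proof. unfold rr. pose proof Rlt_sqrt2_0. field. lra. Qed.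

Lemma W_of_spec y : Rabs y <= 1/10 ->
  Rabs (W_of y) <= 4 * Rabs (y / 3) /\ zrel (y / 3) (W_of y) = 0.
Proof.
  intros Hy. pose proof Rlt_sqrt2_0 as Hs. pose proof rr_bounds.
  assert (Hx : Rabs (rr * y) <= 1/20)
    by (rewrite Rabs_mult, Rabs_pos_eq by lra; pose proof (Rabs_pos y); nra).
  destruct (zz_spec _ Hx) as [Hq Hb]. unfold W_of. rewrite <- rr_div_sqrt2.
  set (x := rr * y) in *. set (z := zz x) in *.
  split.
  - unfold Rdiv. rewrite !(Rabs_mult _ (/ sqrt 2)). pose proof (Rabs_pos (/ sqrt 2)). nra.
  - assert (Hq' : 4 * x * z ^ 2 - (2 + 9 * x ^ 2) * z + 4 * x = 0)
      by (rewrite mu_eq in Hq; rewrite <- (Rmult_0_r (2 + 9 * x ^ 2)), <- Hq; field; nra).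
    assert (E := zrel_scaled (sqrt 2) (x / sqrt 2) (z / sqrt 2) (sqrt_sqrt 2 ltac:(lra))).
    replace (sqrt 2 * (x / sqrt 2)) with x in E by (field; lra).
    replace (sqrt 2 * (z / sqrt 2)) with z in E by (field; lra).
    rewrite Hq' in E. apply (Rmult_eq_reg_l (-2 * sqrt 2)); lra.
Qed.

Lemma scaled_bounds t W : Rabs t <= 1/30 -> Rabs W <= 4 * Rabs t ->
  Rabs W <= 2/15 /\ Rabs (t * W) <= 4 * t ^ 2 /\ 9/10 <= Ds t W /\
  9/10 <= E1s t W <= 11/10 /\ 9/10 <= E2s t W <= 11/10.
Proof.
  intros Ht HW. pose proof (Rabs_pos t). pose proof (Rabs_pos W).
  assert (Htw : Rabs (t * W) <= 4 * t ^ 2)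
    by (rewrite Rabs_mult, <- (pow2_abs t); nra).
  assert (Hu : Rabs (t * W) <= 1/200) by (rewrite <- (pow2_abs t) in Htw; nra).
  assert (HWb : Rabs W <= 2/15) by lra.
  split; [exact HWb|split; [exact Htw|]].
  apply Rabs_le_between in Hu. apply Rabs_le_between in HWb.
  assert (Hv : W ^ 2 <= 16/900) by nra.
  set (u := t * W) in *.
  replace (Ds t W) with ((1 - 5 * u) ^ 2 - 4 * u ^ 2 * W ^ 2) by (unfold Ds, u; ring).
  replace (E1s t W) with (1 - 5 * u + 2 * u ^ 2) by (unfold E1s, u; ring).
  replace (E2s t W) with (1 - 5 * u + 2 * W ^ 2) by (unfold E2s, u; ring).
  assert (0 <= W ^ 2) by nra. assert (u ^ 2 <= 1/40000) by nra.
  repeat split; nra.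
Qed.

Lemma Rabs_div_le a b c : 0 < b -> Rabs a <= c * b -> Rabs (a / b) <= c.
Proof.
  intros Hb Ha. rewrite Rabs_div, (Rabs_pos_eq b) by lra.
  apply Rmult_le_reg_r with b; [lra|]. unfold Rdiv. rewrite Rmult_assoc, Rinv_l; lra.
Qed.

Lemma gs2_gs3_bounds t W : Rabs t <= 1/30 -> Rabs W <= 4 * Rabs t ->
  Rabs (gs 2 t W) <= 1 /\ Rabs (gs 3 t W) <= 3 * t ^ 2.
Proof.
  intros Ht HW. destruct (scaled_bounds t W Ht HW) as (HWb & Htw & HD & HE1 & HE2).
  pose proof (Rabs_pos W). pose proof (Rabs_pos (t * W)).
  simpl gs. split; apply Rabs_div_le; try lra; rewrite Rabs_mult;
    rewrite (Rabs_pos_eq (E1s t W)) || rewrite (Rabs_pos_eq (E2s t W)); try lra.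
  - rewrite Rabs_Ropp, Rabs_div, (Rabs_pos_eq 2) by lra. nra.
  - rewrite Rabs_div, (Rabs_pos_eq 2) by lra. nra.
Qed.

Lemma gs_identities t W : t <> 0 -> Ds t W <> 0 -> zrel t W = 0 ->
  gs 1 t W * W = 3 * t * (1/3 * (gs 2 t W * W) + 2/3 * gs 1 t W) /\
  gs 4 t W * W = 3 * t * (1/3 * (gs 3 t W * W) + 2/3 * gs 4 t W) /\
  gs 2 t W = 3 * t * (-(1/3) * gs 1 t W + 4/3 * (gs 2 t W * W)) /\
  gs 3 t W = 3 * t * (-(1/3) * gs 4 t W + 4/3 * (gs 3 t W * W)) /\
  gs 1 t W = 1 + 3 * t * (-(1/3) * gs 2 t W + 4/3 * (gs 3 t W * W)) /\
  gs 4 t W = gs 2 t W /\ gs 3 t W = gs 1 t W - 1.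
Proof.
  intros Ht HD Hrel.
  (* each difference of the two sides is a multiple of [zrel t W] *)
  assert (K : forall a b Q, a - b = Q * zrel t W / (2 * t * Ds t W) -> a = b).
  { intros a b Q H. rewrite Hrel in H. unfold Rdiv in H. rewrite Rmult_0_r, Rmult_0_l in H. lra. }
  unfold gs, zrel, Fs, E1s, E2s, Ds in *.
  split; [apply (K _ _ (W - 5 * t * W ^ 2 + 2 * t ^ 2 * W ^ 3)); field; auto|].
  split; [apply (K _ _ (- t * W - 2 * t * W ^ 3 + 5 * t ^ 2 * W ^ 2)); field; auto|].
  split; [apply (K _ _ 0); field; auto|].
  split; [apply (K _ _ 0); field; auto|].
  split; [apply (K _ _ (1 - 5 * t * W + 2 * t ^ 2 * W ^ 2)); field; auto|].
  split; [apply (K _ _ (-2 * t * W ^ 2)); field; auto|].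
  apply (K _ _ (-1 + 5 * t * W)); field; auto.
Qed.

(* The pairs [(j, d)] with [canon_type j d = j]: one label for each class. *)
Definition canonical (j d : nat) : Prop := (1 <= j <= 4)%nat /\ (d <> 0 \/ j <= 2)%nat.

Lemma gs_fixpoint t W j d : t <> 0 -> Ds t W <> 0 -> zrel t W = 0 -> canonical j d ->
  gs j t W * W ^ d = Gtype_init j d + 3 * t * Gstep (fun a b => gs a t W * W ^ b) j d.
Proof.
  intros Ht HD Hrel [Hj Hd].
  destruct (gs_identities t W Ht HD Hrel) as (I1 & I4 & I2 & I3 & I0 & E42 & _).
  unfold Gtype_init, Gstep. destruct d as [|d].
  - destruct Hd as [Hd|Hd]; [lia|].
    destruct j as [|[|[|j]]]; try lia; simpl pow; [rewrite I0 at 1|rewrite I2 at 1]; ring.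
  - destruct j as [|[|[|[|[|j]]]]]; try lia; simpl pow.
    + replace (gs 1 t W * (W * W ^ d)) with (gs 1 t W * W * W ^ d) by ring. rewrite I1. ring.
    + replace (gs 2 t W * (W * W ^ d)) with (gs 2 t W * W ^ d * W) by ring.
      rewrite I2 at 1. ring.
    + replace (gs 3 t W * (W * W ^ d)) with (gs 3 t W * W ^ d * W) by ring.
      rewrite I3 at 1. ring.
    + replace (gs 4 t W * (W * W ^ d)) with (gs 4 t W * W * W ^ d) by ring. rewrite I4.
      destruct d as [|d]; [change (canon_type 4 0) with 2%nat; rewrite E42
                          |change (canon_type 4 (S d)) with 4%nat]; ring.
Qed.

Lemma small_regime y : Rabs y <= 1/10 -> y <> 0 ->
  y / 3 <> 0 /\ Rabs (y / 3) <= 1/30 /\ Rabs (W_of y) <= 4 * Rabs (y / 3) /\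
  zrel (y / 3) (W_of y) = 0 /\ Ds (y / 3) (W_of y) <> 0.
Proof.
  intros Hy Hy0. destruct (W_of_spec y Hy) as [HW Hrel].
  assert (Ht : Rabs (y / 3) <= 1/30)
    by (unfold Rdiv; rewrite Rabs_mult, (Rabs_pos_eq (/ 3)); lra).
  destruct (scaled_bounds _ _ Ht HW) as (_ & _ & HD & _).
  repeat split; auto; lra.
Qed.

Lemma gj_rr j y : y <> 0 -> gj j (rr * y) = gs j (y / 3) (W_of y).
Proof.
  intros Hy. pose proof rr_bounds.
  rewrite gj_scaled by (apply Rmult_integral_contrapositive_currified; lra).
  rewrite rr_div_sqrt2. reflexivity.
Qed.

Lemma gs_small_identities y : Rabs y <= 1/10 -> y <> 0 ->
  gs 4 (y / 3) (W_of y) = gs 2 (y / 3) (W_of y) /\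
  gs 3 (y / 3) (W_of y) = gs 1 (y / 3) (W_of y) - 1.
Proof.
  intros Hy Hy0. destruct (small_regime y Hy Hy0) as (Ht0 & _ & _ & Hrel & HD).
  destruct (gs_identities _ _ Ht0 HD Hrel) as (_ & _ & _ & _ & _ & E42 & E31). auto.
Qed.

Lemma rr_scaling x : Rabs x < rr / 10 -> x = rr * (x / rr) /\ Rabs (x / rr) <= 1/10.
Proof.
  intros Hx. pose proof rr_bounds. split; [field; lra|].
  unfold Rdiv. rewrite Rabs_mult, (Rabs_pos_eq (/ rr)) by (apply Rlt_le, Rinv_0_lt_compat; lra).
  apply Rmult_le_reg_r with rr; [lra|]. rewrite Rmult_assoc, Rinv_l; lra.
Qed.

Lemma g1_raw_near_0 x : Rabs x < rr / 10 -> x <> 0 -> Rabs (g1_raw x - 1) <= 3/2 * x ^ 2.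
Proof.
  intros Hx Hx0. pose proof rr_bounds.
  assert (Hrr : rr ^ 2 = 2 / 9) by (unfold rr, Rdiv; rewrite Rpow_mult_distr, pow2_sqrt; lra).
  destruct (rr_scaling x Hx) as [Ex Hy]. set (y := x / rr) in *.
  assert (Hy0 : y <> 0) by (intros E; rewrite E, Rmult_0_r in Ex; lra).
  destruct (small_regime y Hy Hy0) as (_ & Ht & HW & _).
  replace (g1_raw x) with (gj 1 (rr * y))
    by (rewrite <- Ex; simpl; unfold g1; destruct (Req_EM_T x 0); tauto).
  rewrite gj_rr by auto. destruct (gs_small_identities y Hy Hy0) as [_ E31].
  replace (gs 1 (y / 3) (W_of y) - 1) with (gs 3 (y / 3) (W_of y)) by lra.
  destruct (gs2_gs3_bounds _ _ Ht HW) as [_ H3].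
  replace (3 * (y / 3) ^ 2) with (3/2 * x ^ 2) in H3
    by (rewrite Ex; field_simplify; rewrite Hrr; field).
  exact H3.
Qed.

Lemma g1_0 : g1 0 = 1.
Proof.
  unfold g1. destruct (Req_EM_T 0 0) as [_|]; [|lra].
  replace (Lim g1_raw 0) with (Finite 1); [reflexivity|].
  symmetry. apply is_lim_unique, is_lim_spec. intros eps. pose proof rr_bounds.
  assert (Hd : 0 < Rmin (rr / 10) eps) by (apply Rmin_pos; [lra|apply cond_pos]).
  exists (mkposreal _ Hd). intros x Hx Hx0.
  unfold ball in Hx; simpl in Hx; unfold AbsRing_ball, abs, minus, plus, opp in Hx; simpl in Hx.
  rewrite Ropp_0, Rplus_0_r in Hx.
  assert (Hx1 := Rlt_le_trans _ _ _ Hx (Rmin_l _ _)).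
  assert (Hx2 := Rlt_le_trans _ _ _ Hx (Rmin_r _ _)).
  eapply Rle_lt_trans; [apply g1_raw_near_0; auto|].
  rewrite <- (pow2_abs x). pose proof (Rabs_pos x). nra.
Qed.

Lemma gj_at_0 j : gj j 0 = if (j =? 1)%nat then 1 else 0.
Proof.
  destruct j as [|[|[|[|j]]]]; simpl gj; try (rewrite g1_0; reflexivity);
    unfold g2, g3, g4; rewrite zz_0; simpl; unfold Rdiv; ring.
Qed.

Lemma Rabs_gj_rr_le j y : (1 <= j <= 4)%nat -> Rabs y <= 1/10 -> Rabs (gj j (rr * y)) <= 2.
Proof.
  intros Hj Hy. destruct (Req_dec y 0) as [->|Hy0].
  - rewrite Rmult_0_r, gj_at_0. destruct (j =? 1)%nat; rewrite ?Rabs_R1, ?Rabs_R0; lra.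
  - destruct (small_regime y Hy Hy0) as (_ & Ht & HW & _).
    destruct (gs2_gs3_bounds _ _ Ht HW) as [B2 B3].
    destruct (gs_small_identities y Hy Hy0) as [E42 E31].
    assert (Ht2 : 3 * (y / 3) ^ 2 <= 1)
      by (rewrite <- (pow2_abs (y / 3)); pose proof (Rabs_pos (y / 3)); nra).
    rewrite gj_rr by auto.
    destruct j as [|[|[|[|[|j]]]]]; try lia; simpl gj; rewrite ?E42; try lra.
    replace (gs 1 (y / 3) (W_of y)) with (gs 3 (y / 3) (W_of y) + 1) by lra.
    eapply Rle_trans; [apply Rabs_triang|]. rewrite Rabs_R1. lra.
Qed.

Definition closed_form (j d : nat) (y : R) : R := gj j (rr * y) * W_of y ^ d.

Lemma Rabs_closed_form_le j d y : (1 <= j <= 4)%nat -> Rabs y <= 1/10 ->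
  Rabs (closed_form j d y) <= 2.
Proof.
  intros Hj Hy. unfold closed_form. rewrite Rabs_mult, <- RPow_abs.
  destruct (W_of_spec y Hy) as [HW _].
  assert (HW1 : Rabs (W_of y) <= 1)
    by (unfold Rdiv in HW; rewrite Rabs_mult, (Rabs_pos_eq (/ 3)) in HW; lra).
  assert (Rabs (W_of y) ^ d <= 1)
    by (rewrite <- (pow1 d); apply pow_incr; split; [apply Rabs_pos|lra]).
  pose proof (Rabs_gj_rr_le j y Hj Hy). pose proof (Rabs_pos (gj j (rr * y))).
  pose proof (pow_le _ d (Rabs_pos (W_of y))). nra.
Qed.

Lemma Gstep_ext H H' j d : (forall a b, H a b = H' a b) -> Gstep H j d = Gstep H' j d.
Proof. intros E. unfold Gstep. destruct d, j as [|[|[|[|j]]]]; rewrite !E; reflexivity. Qed.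

Lemma closed_form_fixpoint j d y : canonical j d -> Rabs y <= 1/10 ->
  closed_form j d y = Gtype_init j d + y * Gstep (fun a b => closed_form a b y) j d.
Proof.
  intros Hc Hy. destruct (Req_dec y 0) as [->|Hy0].
  - rewrite Rmult_0_l, Rplus_0_r. unfold closed_form. rewrite Rmult_0_r, W_of_0, gj_at_0.
    destruct Hc as [Hj Hd]. destruct d as [|d].
    + destruct Hd as [Hd|Hd]; [lia|]. destruct j as [|[|[|j]]]; try lia; simpl; ring.
    + rewrite pow_i by lia. destruct j as [|[|j]]; simpl; ring.
  - destruct (small_regime y Hy Hy0) as (Ht0 & _ & _ & Hrel & HD).
    rewrite (Gstep_ext _ (fun a b => gs a (y / 3) (W_of y) * W_of y ^ b))
      by (intros a b; unfold closed_form; rewrite gj_rr; auto).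
    unfold closed_form at 1. rewrite gj_rr, gs_fixpoint by auto.
    replace (3 * (y / 3)) with y by field. reflexivity.
Qed.

(** * The generating series of [Gtype] *)

Ltac solve_canonical :=
  unfold canonical; split; [lia|first [left; lia | right; lia]].

Lemma Gstep_bound H B j d : (forall a b, canonical a b -> Rabs (H a b) <= B) ->
  Rabs (Gstep H j d) <= 5/3 * B.
Proof.
  intros HB.
  assert (K : forall a b u v, Rabs a + Rabs b <= 5/3 -> Rabs u <= B -> Rabs v <= B ->
                Rabs (a * u + b * v) <= 5/3 * B).
  { intros a b u v Hab Hu Hv. eapply Rle_trans; [apply Rabs_triang|].
    rewrite !Rabs_mult. pose proof (Rabs_pos a). pose proof (Rabs_pos b).
    pose proof (Rabs_pos u). nra. }
  unfold Gstep; destruct d as [|[|d]]; destruct j as [|[|[|[|j]]]];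
    apply K; rewrite ?Rabs_Ropp, ?Rabs_pos_eq by lra; try lra; apply HB; simpl.
  all: solve_canonical.
Qed.

Lemma Gtype_bound k j d : Rabs (Gtype k j d) <= (5/3) ^ k.
Proof.
  revert j d; induction k as [|k IH]; intros j d.
  - unfold Gtype, Gtype_init. destruct j as [|[|j]], d; rewrite ?Rabs_R0, ?Rabs_R1; lra.
  - apply Gstep_bound. auto.
Qed.

Lemma CV_radius_ge_geom a M q : 0 < q -> (forall k, Rabs (a k) <= M * q ^ k) ->
  Rbar_le (/ q) (CV_radius a).
Proof.
  intros Hq Ha. apply (proj1 (CV_radius_bounded a)). exists M. intros k.
  rewrite Rabs_mult, <- RPow_abs, (Rabs_pos_eq (/ q)) by (apply Rlt_le, Rinv_0_lt_compat; lra).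
  eapply Rle_trans; [apply Rmult_le_compat_r; [apply pow_le, Rlt_le, Rinv_0_lt_compat; lra|apply Ha]|].
  rewrite Rmult_assoc, <- Rpow_mult_distr, Rinv_r, pow1 by lra. lra.
Qed.

Lemma Rabs_PSeries_le_geom a q y : 0 <= q -> (forall k, Rabs (a k) <= q ^ k) ->
  q * Rabs y < 1 -> Rabs (PSeries a y) <= / (1 - q * Rabs y).
Proof.
  intros Hq Ha Hy. pose proof (Rabs_pos y).
  assert (Hb : forall k, Rabs (a k * y ^ k) <= (q * Rabs y) ^ k).
  { intros k. rewrite Rabs_mult, <- RPow_abs, Rpow_mult_distr.
    apply Rmult_le_compat_r; [apply pow_le, Rabs_pos|apply Ha]. }
  assert (Hg : ex_series (fun k => (q * Rabs y) ^ k))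
    by (apply ex_series_geom; rewrite Rabs_pos_eq; nra).
  assert (Habs : ex_series (fun k => Rabs (a k * y ^ k))).
  { apply (@ex_series_le R_AbsRing R_CompleteNormedModule _ (fun k => (q * Rabs y) ^ k)); auto.
    intros k. change (Rabs (Rabs (a k * y ^ k)) <= (q * Rabs y) ^ k).
    rewrite Rabs_Rabsolu. apply Hb. }
  unfold PSeries. eapply Rle_trans; [apply Series_Rabs, Habs|].
  eapply Rle_trans; [apply (Series_le _ (fun k => (q * Rabs y) ^ k)); auto|].
  - intros k. split; [apply Rabs_pos|apply Hb].
  - rewrite Series_geom by (rewrite Rabs_pos_eq; nra). lra.
Qed.

Lemma PSeries_lin_comb a b al be y : ex_pseries a y -> ex_pseries b y ->
  PSeries (fun k => al * a k + be * b k) y = al * PSeries a y + be * PSeries b y.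
Proof.
  intros Ha Hb. rewrite <- !PSeries_scal, <- PSeries_plus.
  - apply PSeries_ext. reflexivity.
  - apply ex_pseries_scal; auto. apply Rmult_comm.
  - apply ex_pseries_scal; auto. apply Rmult_comm.
Qed.

Lemma PSeries_Gstep F j d y : (forall a b, ex_pseries (fun k => F k a b) y) ->
  PSeries (fun k => Gstep (F k) j d) y = Gstep (fun a b => PSeries (fun k => F k a b) y) j d.
Proof.
  intros HF. unfold Gstep. destruct d, j as [|[|[|[|j]]]]; apply PSeries_lin_comb; apply HF.
Qed.

Definition gen_series (j d : nat) (y : R) : R := PSeries (fun k => Gtype k j d) y.

Lemma Gtype_CV_radius j d : Rbar_le (3/5) (CV_radius (fun k => Gtype k j d)).
Proof.
  replace (3/5) with (/ (5/3)) by field.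
  apply (CV_radius_ge_geom _ 1); [lra|]. intros k. rewrite Rmult_1_l. apply Gtype_bound.
Qed.

Lemma ex_gen_series j d y : Rabs y <= 1/10 -> ex_pseries (fun k => Gtype k j d) y.
Proof.
  intros Hy. apply CV_radius_inside. eapply Rbar_lt_le_trans; [|apply Gtype_CV_radius].
  simpl. lra.
Qed.

Lemma gen_series_fixpoint j d y : Rabs y <= 1/10 ->
  gen_series j d y = Gtype_init j d + y * Gstep (fun a b => gen_series a b y) j d.
Proof.
  intros Hy. unfold gen_series at 1. rewrite PSeries_decr_1 by (apply ex_gen_series; auto).
  rewrite (PSeries_ext _ (fun k => Gstep (Gtype k) j d)) by reflexivity.
  rewrite PSeries_Gstep by (intros; apply ex_gen_series; auto).
  reflexivity.
Qed.

Lemma Rabs_gen_series_le j d y : Rabs y <= 1/10 -> Rabs (gen_series j d y) <= 6/5.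
Proof.
  intros Hy. eapply Rle_trans; [apply (Rabs_PSeries_le_geom _ (5/3)); try lra|].
  - intros k. apply (Gtype_bound k j d).
  - replace (6/5) with (/ (5/6)) by field. apply Rinv_le_contravar; lra.
Qed.

Lemma Gstep_sub H H' j d : Gstep H j d - Gstep H' j d = Gstep (fun a b => H a b - H' a b) j d.
Proof. unfold Gstep. destruct d, j as [|[|[|[|j]]]]; ring. Qed.

(* Bounded solutions of [D = y Gstep D] on canonical pairs vanish: [y Gstep] is
   a contraction of ratio [1/6]. *)
Lemma Gstep_fixpoint_zero y D M : Rabs y <= 1/10 ->
  (forall a b, canonical a b -> Rabs (D a b) <= M) ->
  (forall a b, canonical a b -> D a b = y * Gstep D a b) ->
  forall a b, canonical a b -> D a b = 0.
Proof.
  intros Hy HM HD.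
  assert (Hn : forall n a b, canonical a b -> Rabs (D a b) <= M * (1/6) ^ n).
  { induction n as [|n IH]; intros a b Hab; [rewrite pow_O, Rmult_1_r; auto|].
    rewrite HD, Rabs_mult by auto.
    pose proof (Gstep_bound D _ a b IH). pose proof (Rabs_pos y).
    pose proof (Rabs_pos (Gstep D a b)). simpl pow. nra. }
  intros a b Hab. destruct (Req_dec (D a b) 0) as [E|E]; auto. exfalso.
  assert (HM0 : 0 < M) by (pose proof (Hn O a b Hab); pose proof (Rabs_pos_lt _ E); simpl in *; lra).
  destruct (pow_lt_1_zero (1/6) ltac:(rewrite Rabs_pos_eq; lra) (Rabs (D a b) / M))
    as [N HN]; [apply Rdiv_lt_0_compat; [apply Rabs_pos_lt|]; auto|].
  specialize (HN N (le_n N)). rewrite Rabs_pos_eq in HN by (apply pow_le; lra).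
  pose proof (Hn N a b Hab).
  apply (Rmult_lt_compat_l M) in HN; [|lra].
  replace (M * (Rabs (D a b) / M)) with (Rabs (D a b)) in HN by (field; lra). lra.
Qed.

Lemma gen_series_eq_closed_form j d y : canonical j d -> Rabs y <= 1/10 ->
  gen_series j d y = closed_form j d y.
Proof.
  intros Hc Hy. apply Rminus_diag_uniq. revert j d Hc.
  apply (Gstep_fixpoint_zero y (fun a b => gen_series a b y - closed_form a b y) (6/5 + 2) Hy).
  - intros a b [Ha _]. eapply Rle_trans; [apply Rabs_triang|]. rewrite Rabs_Ropp.
    pose proof (Rabs_gen_series_le a b y Hy). pose proof (Rabs_closed_form_le a b y Ha Hy).
    lra.
  - intros a b Hab. rewrite gen_series_fixpoint, closed_form_fixpoint at 1 by auto.
    rewrite <- Gstep_sub. ring.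
Qed.

(** * Taylor coefficients at 0 *)

Lemma locally_0_Rabs_lt (P : R -> Prop) r : 0 < r ->
  (forall x, Rabs x < r -> P x) -> locally 0 P.
Proof.
  intros Hr HP. exists (mkposreal r Hr). intros x Hx. apply HP.
  unfold ball in Hx; simpl in Hx; unfold AbsRing_ball, abs, minus, plus, opp in Hx; simpl in Hx.
  rewrite Ropp_0, Rplus_0_r in Hx. exact Hx.
Qed.

Lemma locally_CV_disk a : Rbar_lt 0 (CV_radius a) ->
  locally 0 (fun y => Rbar_lt (Rabs y) (CV_radius a)).
Proof.
  destruct (CV_radius a) as [r| |]; simpl; intros H; [|exists (mkposreal 1 Rlt_0_1); auto|tauto].
  apply (locally_0_Rabs_lt _ r); auto.
Qed.

Lemma Derive_n_PSeries_sub_const a c k : Rbar_lt 0 (CV_radius a) ->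
  Derive_n (fun x => PSeries a x - c) (S k) 0 = a (S k) * INR (fact (S k)).
Proof.
  intros Ha. rewrite Derive_n_minus.
  - rewrite Derive_n_const, Derive_n_coef by exact Ha. ring.
  - eapply filter_imp; [|apply locally_CV_disk, Ha].
    intros y Hy k' _. apply ex_derive_n_PSeries, Hy.
  - apply filter_forall. intros y k' _. apply ex_derive_n_const.
Qed.

Definition taylor_coef (j d k : nat) : R := sqrt 2 ^ d * Gtype k j d / rr ^ k.

Lemma taylor_coef_CV_radius j d : Rbar_le (3 * rr / 5) (CV_radius (taylor_coef j d)).
Proof.
  pose proof rr_bounds. pose proof Rlt_sqrt2_0.
  replace (3 * rr / 5) with (/ (5 / (3 * rr))) by (field; lra).
  apply (CV_radius_ge_geom _ (sqrt 2 ^ d)); [apply Rdiv_lt_0_compat; lra|]. intros k.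
  replace (sqrt 2 ^ d * (5 / (3 * rr)) ^ k) with (sqrt 2 ^ d * (5/3) ^ k / rr ^ k)
    by (replace (5 / (3 * rr)) with (5/3 * / rr) by (field; lra);
        rewrite Rpow_mult_distr, pow_inv; unfold Rdiv; ring).
  unfold taylor_coef, Rdiv.
  rewrite !Rabs_mult, (Rabs_pos_eq (sqrt 2 ^ d)), (Rabs_pos_eq (/ rr ^ k))
    by (apply Rlt_le; try apply Rinv_0_lt_compat; apply pow_lt; lra).
  apply Rmult_le_compat_r; [apply Rlt_le, Rinv_0_lt_compat, pow_lt; lra|].
  apply Rmult_le_compat_l; [apply pow_le; lra|apply Gtype_bound].
Qed.

Lemma gj_zz_PSeries j d x : canonical j d -> Rabs x < rr / 10 ->
  gj j x * zz x ^ d = PSeries (taylor_coef j d) x.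
Proof.
  intros Hc Hx. pose proof rr_bounds. pose proof Rlt_sqrt2_0.
  destruct (rr_scaling x Hx) as [Ex Hy].
  assert (E := gen_series_eq_closed_form j d (x / rr) Hc Hy).
  unfold gen_series, closed_form, W_of in E. rewrite <- Ex in E.
  replace (gj j x * zz x ^ d) with (sqrt 2 ^ d * (gj j x * (zz x / sqrt 2) ^ d))
    by (unfold Rdiv; rewrite Rpow_mult_distr, pow_inv; field; apply pow_nonzero; lra).
  rewrite <- E. unfold PSeries. rewrite <- Series_scal_l. apply Series_ext. intros k.
  unfold taylor_coef, Rdiv. rewrite Rpow_mult_distr, pow_inv. field. apply pow_nonzero; lra.
Qed.

Lemma taylor_coef_CV_radius_pos j d : Rbar_lt 0 (CV_radius (taylor_coef j d)).
Proof.
  pose proof rr_bounds. eapply Rbar_lt_le_trans; [|apply taylor_coef_CV_radius]. simpl. lra.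
Qed.

Lemma Derive_n_gj_zz_canonical j d k : canonical j d ->
  Derive_n (fun x => gj j x * zz x ^ d) k 0 = taylor_coef j d k * INR (fact k).
Proof.
  intros Hc. pose proof rr_bounds.
  rewrite (Derive_n_ext_loc _ (PSeries (taylor_coef j d))).
  - apply Derive_n_coef, taylor_coef_CV_radius_pos.
  - apply (locally_0_Rabs_lt _ (rr / 10)); [lra|]. intros x Hx. apply gj_zz_PSeries; auto.
Qed.

Lemma g4_eq_g2_g3_eq_g1_sub1 x : Rabs x < rr / 10 -> g4 x = g2 x /\ g3 x = g1 x - 1.
Proof.
  intros Hx. destruct (Req_dec x 0) as [->|Hx0].
  - rewrite g1_0. unfold g2, g3, g4. rewrite zz_0. unfold Rdiv. split; ring.
  - destruct (rr_scaling x Hx) as [Ex Hy]. set (y := x / rr) in *.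
    assert (Hy0 : y <> 0) by (intros E; rewrite E, Rmult_0_r in Ex; lra).
    change g4 with (gj 4). change g2 with (gj 2). change g3 with (gj 3). change g1 with (gj 1).
    rewrite Ex, !gj_rr by auto. apply gs_small_identities; auto.
Qed.

Lemma Derive_n_gj_zz j d k : (1 <= k)%nat -> (1 <= j <= 4)%nat ->
  Derive_n (fun x => gj j x * zz x ^ d) k 0
  = taylor_coef (canon_type j d) d k * INR (fact k).
Proof.
  intros Hk Hj. pose proof rr_bounds.
  destruct d as [|d]; [|simpl canon_type; apply Derive_n_gj_zz_canonical; solve_canonical].
  destruct j as [|[|[|[|[|j]]]]]; try lia; simpl canon_type;
    try (apply Derive_n_gj_zz_canonical; solve_canonical).
  - destruct k as [|k]; [lia|].
    rewrite (Derive_n_ext_loc _ (fun x => PSeries (taylor_coef 1 0) x - 1)).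
    + apply Derive_n_PSeries_sub_const, taylor_coef_CV_radius_pos.
    + apply (locally_0_Rabs_lt _ (rr / 10)); [lra|]. intros x Hx.
      rewrite <- gj_zz_PSeries by (auto; solve_canonical). simpl.
      destruct (g4_eq_g2_g3_eq_g1_sub1 x Hx) as [_ ->]. ring.
  - rewrite <- (Derive_n_gj_zz_canonical 2 0) by solve_canonical.
    apply Derive_n_ext_loc, (locally_0_Rabs_lt _ (rr / 10)); [lra|]. intros x Hx.
    simpl. destruct (g4_eq_g2_g3_eq_g1_sub1 x Hx) as [-> _]. reflexivity.
Qed.

Theorem proposition1 :
  forall (k d j : nat) (A B : oedge),
    (1 <= k)%nat -> (1 <= j <= 4)%nat ->
    valid_oedge A -> valid_oedge B ->
    dist2 (Mid A) (Mid B) = (2 * d)%nat ->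
    pair_type j A B ->
    G k B A =
      (sqrt 2 / 3) ^ k * (1 / sqrt 2) ^ d * / INR (fact k)
      * Derive_n (fun x => gj j x * zz x ^ d) k 0.
Proof.
  intros k d j A B Hk Hj HA HB Hd Hp.
  rewrite (G_eq_Gtype k A B j d HA HB Hp Hd), Derive_n_gj_zz by auto.
  unfold taylor_coef. change (sqrt 2 / 3) with rr.
  pose proof rr_bounds. pose proof Rlt_sqrt2_0. pose proof (INR_fact_neq_0 k).
  unfold Rdiv. rewrite Rmult_1_l, pow_inv.
  field. repeat split; auto; apply pow_nonzero; lra.
Qed.
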